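(* Let $G=([n],E)$ be a connected simple graph with $n\ge2$, vertex degrees $d_i$, and $\mathsf{B}_G=\{d_j^{-1/2}E_{i,j},\ d_i^{-1/2}E_{j,i} : \{i,j\}\in E\}$. Then (1) $G$ has an independent set of size $s$ if and only if $\mathsf{B}_G$ has an isotropic space of dimension $s$; (2) $G$ has a vertex $c$-coloring (partition of $[n]$ into $c$ independent sets) if and only if $\mathsf{B}_G$ has an isotropic $c$-decomposition.
   Context: $E_{i,j}$ is the matrix with $(i,j)$ entry $1$ and others $0$. For a finite set $\mathsf{B}\subseteq\mathrm{M}(n,\mathbb{C})$, an isotropic space is a subspace $U\le\mathbb{C}^n$ with $u^\dagger Bu'=0$ for all $u,u'\in U$ and all $B\in\mathsf{B}$ ($\dagger$ = conjugate transpose). An isotropic $c$-decomposition of $\mathsf{B}$ is an orthogonal (w.r.t. the standard Hermitian inner product) direct sum decomposition $\mathbb{C}^n=U_1\oplus\cdots\oplus U_c$ into $c$ nonzero isotropic spaces of $\mathsf{B}$. *)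

From HB Require Import structures.
From mathcomp Require Import all_boot all_order all_algebra.
Set Implicit Arguments. Unset Strict Implicit. Unset Printing Implicit Defensive.
Import Order.TTheory GRing.Theory Num.Theory.
Local Open Scope ring_scope.

Definition herm_form (R : numClosedFieldType) (n : nat) (u : 'rV[R]_n) (B : 'M[R]_n)
  (v : 'rV[R]_n) : R :=
  ((map_mx Num.conj u) *m B *m v^T) 0 0.

Definition herm_ip (R : numClosedFieldType) (n : nat) (u v : 'rV[R]_n) : R :=
  ((map_mx Num.conj u) *m v^T) 0 0.

(* A subspace of R^n is represented by a matrix through its row space (%MS).
   U is isotropic for the (possibly infinite-described, here predicate-given)
   set of matrices Bs. *)
Definition isotropic (R : numClosedFieldType) (n : nat) (Bs : 'M[R]_n -> Prop)
  (U : 'M[R]_n) : Prop :=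
  forall u v : 'rV[R]_n, (u <= U)%MS -> (v <= U)%MS ->
    forall B, Bs B -> herm_form u B v = 0.

Definition isotropic_decomposition (R : numClosedFieldType) (n : nat)
  (Bs : 'M[R]_n -> Prop) (c : nat) : Prop :=
  exists U : 'I_c -> 'M[R]_n,
    [/\ forall k, (0 < \rank (U k))%N,
        forall k, isotropic Bs (U k),
        forall k l, k != l -> forall u v : 'rV[R]_n,
            (u <= U k)%MS -> (v <= U l)%MS -> herm_ip u v = 0
      & (1%:M <= \sum_(k < c) U k)%MS].

Definition deg (n : nat) (e : rel 'I_n) (i : 'I_n) : nat := #|[set j | e i j]|.

Definition BG (R : numClosedFieldType) (n : nat) (e : rel 'I_n) (B : 'M[R]_n) : Prop :=
  exists i j : 'I_n, e i j /\
    (B = (sqrtC ((deg e j)%:R))^-1 *: delta_mx i j \/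
     B = (sqrtC ((deg e i)%:R))^-1 *: delta_mx j i).

Definition independent (n : nat) (e : rel 'I_n) (S : {set 'I_n}) : Prop :=
  forall i j, i \in S -> j \in S -> ~~ e i j.

(* The whole argument runs through coordinate subspaces.  For u, v in R^n the
   form u^dagger (a E_{i,j}) v equals a * conj(u_i) * v_j, so a space whose
   vectors all vanish outside an independent set S is isotropic, while an
   isotropic space has an independent support (the set of coordinates on which
   some of its vectors is nonzero), since edge weights d_j^{-1/2} are nonzero.
   Hence:
   (1) an independent S gives the coordinate subspace of S, of dimension |S|;
       an isotropic U lives in the coordinate subspace of its support, so
       dim U <= |supp U| and supp U has an independent subset of size dim U.
   (2) a partition into c independent sets gives c orthogonal coordinate
       subspaces spanning R^n; an isotropic c-decomposition has c <= n (c
       nonzero orthogonal subspaces), and sending each vertex to a part whose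
       support contains it is a proper coloring with c colors, which can be
       made to use every color by recoloring, giving the c color classes. *)

From HB Require Import structures.
From mathcomp Require Import all_boot all_order all_algebra.
Import Order.TTheory GRing.Theory Num.Theory.
Local Open Scope ring_scope.

Section CoordinateSubspaces.
Set Implicit Arguments.
Unset Strict Implicit.
Variables (R : numClosedFieldType) (n : nat).

Lemma herm_form_delta (u v : 'rV[R]_n) (a : R) (i j : 'I_n) :
  herm_form u (a *: delta_mx i j) v = a * ((u 0 i)^* * v 0 j).
Proof.
rewrite /herm_form mxE (bigD1 j) //= big1 => [|k /negbTE kj]; last first.
  by rewrite !mxE big1 ?mul0r // => l _; rewrite !mxE kj andbF !mulr0.
rewrite addr0 !mxE (bigD1 i) //= big1 => [|l li]; last first.
  by rewrite !mxE; case: eqP li => [->|_ _]; rewrite ?eqxx ?mulr0.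
by rewrite addr0 !mxE !eqxx mulr1 [_ * a]mulrC mulrA.
Qed.

Lemma herm_ipE (u v : 'rV[R]_n) : herm_ip u v = \sum_k (u 0 k)^* * v 0 k.
Proof. by rewrite /herm_ip mxE; apply: eq_bigr => k _; rewrite !mxE. Qed.

Lemma herm_ip_eq0 (u : 'rV[R]_n) : herm_ip u u = 0 -> u = 0.
Proof.
rewrite herm_ipE => u0; apply/rowP => k; rewrite mxE.
have nneg i : true -> 0 <= (u 0 i)^* * u 0 i by rewrite -normCKC exprn_ge0.
by apply/eqP; rewrite -normr_eq0 -sqrf_eq0 normCKC; apply/eqP/(psumr_eq0P nneg).
Qed.

Definition supp m (U : 'M[R]_(m, n)) : {set 'I_n} := [set i | col i U != 0].

Lemma supp_vanish m (U : 'M[R]_(m, n)) (u : 'rV_n) (i : 'I_n) :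
  (u <= U)%MS -> i \notin supp U -> u 0 i = 0.
Proof.
move=> /submxP[w ->]; rewrite inE negbK => /eqP Ui0.
rewrite mxE big1 // => k _.
by have := congr1 (fun M : 'cV_m => M k 0) Ui0; rewrite !mxE => ->; rewrite mulr0.
Qed.

Lemma supp_entry m (U : 'M[R]_(m, n)) (i : 'I_n) : i \in supp U -> exists r, U r i != 0.
Proof.
rewrite inE => Ui; apply/existsP; apply: contraR Ui => /existsPn Ui0.
by apply/eqP/colP => r; rewrite !mxE; apply/eqP/negbNE/Ui0.
Qed.

Definition coord_mx (S : {set 'I_n}) : 'M[R]_(#|S|, n) :=
  \matrix_(k, j) (enum_val k == j)%:R.

Definition coord_space (S : {set 'I_n}) : 'M[R]_n := <<coord_mx S>>%MS.

(* The unit vectors e_i, i in S, are independent: their Gram matrix is 1. *)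
Lemma rank_coord_space (S : {set 'I_n}) : \rank (coord_space S) = #|S|.
Proof.
rewrite mxrank_gen; apply/eqP; rewrite eqn_leq rank_leq_row /=.
have := mxrankM_maxl (coord_mx S) (coord_mx S)^T.
suff -> : coord_mx S *m (coord_mx S)^T = 1%:M by rewrite mxrank1.
apply/matrixP => k l; rewrite !mxE (bigD1 (enum_val k)) //= big1 => [|j /negbTE jk].
  by rewrite !mxE eqxx mul1r addr0 (inj_eq enum_val_inj) eq_sym.
by rewrite !mxE eq_sym jk mul0r.
Qed.

Lemma coord_space_vanish (S : {set 'I_n}) (u : 'rV[R]_n) (i : 'I_n) :
  (u <= coord_space S)%MS -> i \notin S -> u 0 i = 0.
Proof.
rewrite genmxE => /submxP[w ->] iS; rewrite mxE big1 // => k _; rewrite !mxE.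
case: eqP => [ki|]; last by rewrite mulr0.
by have := enum_valP k; rewrite ki (negbTE iS).
Qed.

Lemma sub_coord_space (S : {set 'I_n}) (u : 'rV[R]_n) :
  (forall i, i \notin S -> u 0 i = 0) -> (u <= coord_space S)%MS.
Proof.
move=> uS; rewrite (row_sum_delta u) genmxE; apply: summx_sub => i _.
have [iS|/uS->] := boolP (i \in S); last by rewrite scale0r sub0mx.
apply: scalemx_sub.
have -> : delta_mx 0 i = row (enum_rank_in iS i) (coord_mx S).
  by apply/rowP => j; rewrite !mxE enum_rankK_in // eqxx eq_sym.
exact: row_sub.
Qed.

(* Every subspace sits in the coordinate subspace of its support; hence its
   dimension is at most the size of its support. *)
Lemma rank_le_supp m (U : 'M[R]_(m, n)) : (\rank U <= #|supp U|)%N.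
Proof.
rewrite -rank_coord_space; apply/mxrankS/row_subP => r.
by apply: sub_coord_space => i; apply: supp_vanish (row_sub r U).
Qed.

Lemma coord_space_orth (S T : {set 'I_n}) (u v : 'rV[R]_n) :
  [disjoint S & T] -> (u <= coord_space S)%MS -> (v <= coord_space T)%MS ->
  herm_ip u v = 0.
Proof.
move=> ST uS vT; rewrite herm_ipE big1 // => j _.
have [jS|jS] := boolP (j \in S); last by rewrite (coord_space_vanish uS jS) conjC0 mul0r.
by rewrite (coord_space_vanish vT (negbT (disjointFr ST jS))) mulr0.
Qed.

(* A family of c nonzero, pairwise orthogonal subspaces of R^n has c <= n:
   choosing a nonzero vector in each, their Gram matrix is an invertible
   diagonal c x c matrix factoring through R^n. *)
Lemma orthogonal_family_size c (U : 'I_c -> 'M[R]_n) :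
  (forall k, (0 < \rank (U k))%N) ->
  (forall k l, k != l -> forall u v : 'rV[R]_n,
     (u <= U k)%MS -> (v <= U l)%MS -> herm_ip u v = 0) ->
  (c <= n)%N.
Proof.
move=> Uk_nz Uorth.
have nz_row k : exists r, row r (U k) != 0.
  apply/existsP; apply: contraLR (Uk_nz k) => /existsPn Uk0.
  rewrite -leqNgt leqn0 mxrank_eq0; apply/eqP/row_matrixP => r.
  by rewrite row0; apply/eqP/negbNE/Uk0.
have [r r_nz] := fin_all_exists nz_row.
pose X : 'M[R]_(c, n) := \matrix_k row (r k) (U k).
have rowX k : row k X = row (r k) (U k) by rewrite rowK.
have gram : X *m (map_mx Num.conj X)^T = diag_mx (\row_k herm_ip (row k X) (row k X)).
  apply/matrixP => k l; rewrite !mxE.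
  have -> : \sum_j X k j * (map_mx Num.conj X)^T j l = herm_ip (row l X) (row k X).
    by rewrite herm_ipE; apply: eq_bigr => j _; rewrite !mxE mulrC.
  have [->|lk] := eqVneq k l; first by rewrite mulr1n.
  by rewrite mulr0n (Uorth l k) 1?eq_sym // !rowX row_sub.
have: \rank (X *m (map_mx Num.conj X)^T) = c.
  apply: mxrank_unit; rewrite gram unitmxE det_diag unitfE.
  apply/prodf_neq0 => k _; rewrite mxE; apply: contra (r_nz k) => /eqP/herm_ip_eq0.
  by rewrite rowX => ->.
by move=> <-; apply: leq_trans (mxrankM_maxl _ _) (rank_leq_col _).
Qed.

End CoordinateSubspaces.

Section IsotropicSupports.
Set Implicit Arguments.
Unset Strict Implicit.
Variables (R : numClosedFieldType) (n : nat) (e : rel 'I_n).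
Hypothesis e_sym : symmetric e.

(* An endpoint j of an edge has positive degree, so the weight d_j^{-1/2} is nonzero. *)
Lemma edge_weight_neq0 (i j : 'I_n) : e i j -> (sqrtC (deg e j)%:R)^-1 != 0 :> R.
Proof.
move=> eij; rewrite invr_eq0 sqrtC_eq0 pnatr_eq0 -lt0n.
by apply/card_gt0P; exists i; rewrite inE e_sym.
Qed.

(* The support of an isotropic space of B_G is an independent set: for an edge
   {i,j} inside it, u^dagger (d_j^{-1/2} E_{i,j}) v <> 0 for suitable rows u, v. *)
Lemma isotropic_supp_independent (U : 'M[R]_n) :
  isotropic (@BG R n e) U -> independent e (supp U).
Proof.
move=> isoU i j /supp_entry[r Uri] /supp_entry[r' Ur'j]; apply/negP => eij.
have BGij : @BG R n e ((sqrtC (deg e j)%:R)^-1 *: delta_mx i j) by exists i, j; split; [|left].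
have := isoU _ _ (row_sub r U) (row_sub r' U) _ BGij.
rewrite herm_form_delta !mxE; apply/eqP.
by rewrite !mulf_neq0 ?conjC_eq0 // (edge_weight_neq0 eij).
Qed.

(* Conversely, a space all of whose vectors vanish outside an independent set is
   isotropic: every E_{i,j} in B_G joins a coordinate outside that set. *)
Lemma independent_isotropic (S : {set 'I_n}) (U : 'M[R]_n) :
  independent e S -> (forall u : 'rV_n, (u <= U)%MS -> forall i, i \notin S -> u 0 i = 0) ->
  isotropic (@BG R n e) U.
Proof.
move=> indS U_S u v uU vU B [i [j [eij [->|->]]]]; rewrite herm_form_delta.
- have [iS|/(U_S u uU)->] := boolP (i \in S); last by rewrite conjC0 mul0r mulr0.
  have [jS|/(U_S v vU)->] := boolP (j \in S); last by rewrite !mulr0.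
  by have := indS i j iS jS; rewrite eij.
- have [jS|/(U_S u uU)->] := boolP (j \in S); last by rewrite conjC0 mul0r mulr0.
  have [iS|/(U_S v vU)->] := boolP (i \in S); last by rewrite !mulr0.
  by have := indS i j iS jS; rewrite eij.
Qed.

Lemma coord_space_isotropic (S : {set 'I_n}) :
  independent e S -> isotropic (@BG R n e) (coord_space R S).
Proof. by move/independent_isotropic; apply => u /coord_space_vanish. Qed.

End IsotropicSupports.

Section Colorings.
Set Implicit Arguments.
Unset Strict Implicit.
Variables (n c : nat) (e : rel 'I_n).
Hypothesis e_irr : irreflexive e.

Definition proper_coloring (f : 'I_n -> 'I_c) : Prop := forall i j, e i j -> f i != f j.

Definition colors_used (f : 'I_n -> 'I_c) : {set 'I_c} := [set f i | i in 'I_n].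

(* If two vertices share a color and the color k is unused, giving one of them
   the color k keeps the coloring proper (edges have distinct endpoints) and uses
   one more color. *)
Lemma recolor_proper (f : 'I_n -> 'I_c) (i j : 'I_n) (k : 'I_c) :
  proper_coloring f -> i != j -> f i = f j -> k \notin colors_used f ->
  let g x := if x == i then k else f x in
  proper_coloring g /\ colors_used g = k |: colors_used f.
Proof.
move=> f_prop ij fij k_new g.
have used x : f x \in colors_used f by apply: imset_f.
split=> [x y exy|].
  rewrite /g; case: (x =P i) => [xi|_]; case: (y =P i) => [yi|_].
  - by rewrite xi yi e_irr in exy.
  - by apply: contraNN k_new => /eqP ->.
  - by apply: contraNN k_new => /eqP <-.
  - exact: f_prop.
apply/setP => z; rewrite in_setU1; apply/imsetP/orP => [[x _ ->]|].
  by rewrite /g; case: (x =P i) => _; [left | right].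
case=> [/eqP ->|/imsetP[x _ ->]]; first by exists i; rewrite // /g eqxx.
have [->|xi] := eqVneq x i; last by exists x; rewrite // /g (negbTE xi).
by exists j; rewrite // /g eq_sym (negbTE ij) fij.
Qed.

(* With at most n colors available, a proper coloring can be turned into one
   using every color, by repeatedly recoloring a vertex with an unused color. *)
Lemma surjective_proper_coloring (f : 'I_n -> 'I_c) :
  (c <= n)%N -> proper_coloring f ->
  exists g : 'I_n -> 'I_c, proper_coloring g /\ forall k, exists i, g i = k.
Proof.
move=> cn; have [m] := ubnP (c - #|colors_used f|); elim: m f => // m IH f.
move=> lt_m f_prop; have [full|] := leqP c #|colors_used f|.
  have /eqP all_used : colors_used f == setT.
    by rewrite eqEcard subsetT cardsT card_ord.
  exists f; split=> // k.
  have /imsetP[i _ ->] : k \in colors_used f by rewrite all_used inE.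
  by exists i.
move=> not_full.
have /subsetPn[k _ k_new] : ~~ ([set: 'I_c] \subset colors_used f).
  by apply: contraTN not_full => /subset_leq_card; rewrite cardsT card_ord -leqNgt.
have /injectivePn[i [j ij fij]] : ~~ injectiveb f.
  apply: contraTN not_full => /injectiveP f_inj.
  by rewrite -leqNgt (card_imset _ f_inj) card_ord.
have [g_prop g_used] := recolor_proper f_prop ij fij k_new.
apply: IH g_prop; rewrite g_used cardsU1 k_new add1n subnS.
by rewrite -ltnS prednK ?subn_gt0.
Qed.

Lemma coloring_partition (g : 'I_n -> 'I_c) :
  proper_coloring g -> (forall k, exists i, g i = k) ->
  exists P : {set {set 'I_n}},
    [/\ partition P [set: 'I_n], #|P| = c & forall S, S \in P -> independent e S].
Proof.
move=> g_prop g_surj; pose F k := [set i | g i == k].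
have F_neq0 k : F k != set0 by have [i <-] := g_surj k; apply/set0Pn; exists i; rewrite inE.
have F0 : set0 \notin [set F k | k in [set: 'I_c]].
  by apply/imsetP => [[k _ /eqP]]; rewrite eq_sym (negbTE (F_neq0 k)).
have F_disj k l : k \in [set: 'I_c] -> l \in [set: 'I_c] -> l != k -> [disjoint F k & F l].
  move=> _ _ lk; rewrite disjoints_subset; apply/subsetP => x.
  by rewrite !inE => /eqP ->; rewrite eq_sym.
have [F_triv F_inj] := trivIimset F_disj F0.
exists [set F k | k in [set: 'I_c]]; split.
- apply/and3P; split=> //; apply/eqP/setP => x; rewrite cover_imset inE.
  by apply/bigcupP; exists (g x); rewrite ?inE.
- by rewrite (card_in_imset F_inj) cardsT card_ord.
- move=> S /imsetP[k _ ->] x y; rewrite !inE => /eqP gx /eqP gy.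
  by apply/negP => /g_prop; rewrite gx gy eqxx.
Qed.

End Colorings.

Lemma subset_of_size (T : finType) (A : {set T}) (s : nat) :
  (s <= #|A|)%N -> exists S : {set T}, S \subset A /\ #|S| = s.
Proof.
elim: s => [|s IH] s_le; first by exists set0; rewrite sub0set cards0.
have [S [SA cardS]] := IH (ltnW s_le).
have /subsetPn[x xA xS] : ~~ (A \subset S).
  by apply: contraTN s_le => /subset_leq_card; rewrite cardS -ltnNge ltnS.
by exists (x |: S); rewrite subUset sub1set xA SA cardsU1 xS cardS.
Qed.

Section Decompositions.
Variables (R : numClosedFieldType) (n : nat) (e : rel 'I_n).
Hypothesis e_sym : symmetric e.

Lemma partition_decomposition (P : {set {set 'I_n}}) :
  partition P [set: 'I_n] -> (forall S, S \in P -> independent e S) ->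
  isotropic_decomposition (@BG R n e) #|P|.
Proof.
case/and3P=> /eqP P_cover P_triv P_nz P_ind.
pose block (k : 'I_#|P|) : {set 'I_n} := enum_val k.
have blockP k : block k \in P by apply: enum_valP.
exists (fun k => coord_space R (block k)); split.
- move=> k; rewrite rank_coord_space card_gt0.
  by apply: contraNneq P_nz => <-; apply: blockP.
- by move=> k; apply/coord_space_isotropic/P_ind/blockP.
- move=> k l kl u v uk vl; apply: coord_space_orth uk vl.
  apply: (trivIsetP P_triv) => //.
  by apply: contra kl => /eqP/enum_val_inj ->.
- apply/row_subP => i; rewrite row1.
  have /bigcupP[S SP iS] : i \in cover P by rewrite P_cover inE.
  apply: (sumsmx_sup (enum_rank_in SP S)) => //; rewrite /block enum_rankK_in //.
  by apply: sub_coord_space => j; rewrite mxE eqxx /=; case: eqP => [->|]; rewrite ?iS.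
Qed.

(* Conversely, an isotropic c-decomposition yields a proper c-coloring with
   c <= n: each vertex lies in the support of some part (the parts span the
   whole space), and the supports are independent. *)
Lemma decomposition_coloring (c : nat) :
  isotropic_decomposition (@BG R n e) c ->
  (c <= n)%N /\ exists f : 'I_n -> 'I_c, proper_coloring e f.
Proof.
case=> U [U_nz U_iso U_orth U_span]; split; first exact: orthogonal_family_size U_orth.
have covered i : exists k, i \in supp (U k).
  apply/existsP; apply: contraT => /existsPn not_supp.
  have : ((delta_mx 0 i : 'rV[R]_n) <= \sum_k U k)%MS.
    by apply: submx_trans U_span; rewrite -row1 row_sub.
  case/sub_sumsmxP => w unit_i.
  have := congr1 (fun u : 'rV[R]_n => u 0 i) unit_i.
  rewrite !mxE !eqxx summxE big1 => [/eqP|k _]; first by rewrite oner_eq0.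
  exact: supp_vanish (submxMl _ _) (not_supp k).
have [f f_supp] := fin_all_exists covered.
exists f => i j eij; apply: contraTneq eij => fij.
by apply: (isotropic_supp_independent e_sym (U_iso (f i))); rewrite // fij.
Qed.

End Decompositions.

Theorem proposition11p2 (R : numClosedFieldType) (n : nat) (e : rel 'I_n)
  (e_sym : symmetric e) (e_irr : irreflexive e)
  (e_conn : forall i j : 'I_n, connect e i j) (n_ge2 : (2 <= n)%N) :
  (forall s : nat,
     (exists S : {set 'I_n}, #|S| = s /\ independent e S) <->
     (exists U : 'M[R]_n, \rank U = s /\ isotropic (@BG R n e) U)) /\
  (forall c : nat,
     (exists P : {set {set 'I_n}},
        [/\ partition P [set: 'I_n], #|P| = c & forall S, S \in P -> independent e S]) <->
     isotropic_decomposition (@BG R n e) c).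
Proof.
split=> [s|c]; split.
- case=> S [<- S_ind]; exists (coord_space R S).
  by split; [apply: rank_coord_space | apply: coord_space_isotropic].
- case=> U [<- U_iso]; have [S [S_supp <-]] := subset_of_size (rank_le_supp U).
  exists S; split=> // i j iS jS.
  by apply: (isotropic_supp_independent e_sym U_iso); apply: (subsetP S_supp).
- by case=> P [P_part <- P_ind]; apply: partition_decomposition.
- case/(decomposition_coloring e_sym) => c_le_n [f f_prop].
  have [g [g_prop g_surj]] := surjective_proper_coloring e_irr c_le_n f_prop.
  exact: coloring_partition g_prop g_surj.
Qed.
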